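(* Let $n$ be odd and let $q\ge 4$ be even. For every $w\in\mathbb{Z}_q^n$ there exists an ordering $G(0),G(1),\ldots,G(q^n-q-1)$ of the set $\mathbb{Z}_q^n\setminus\{w+(i,i,\ldots,i): 0\le i<q\}$ such that $G(j)$ and $G(j+1)$ are at Lee distance $1$ for all $0\le j<q^n-q-1$, and $G((j+q^{n-1}-1)\bmod (q^n-q)) = G(j)+(1,1,\ldots,1)$ for all $j$ (addition of words in $\mathbb{Z}_q^n$).
   Context: The Lee distance between $v=(v_1,\ldots,v_n)$ and $u=(u_1,\ldots,u_n)$ in $\mathbb{Z}_q^n$ is $\sum_{i=1}^n \min\{|v_i-u_i|,\,q-|v_i-u_i|\}$, where $v_i,u_i$ are regarded as integers in $\{0,\ldots,q-1\}$. (Such an ordering is a quasi-complementary Lee metric Gray code of $q$-ary $n$-tuples missing the $q$ words $w+(i,\ldots,i)$.) *)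

From mathcomp Require Import all_boot all_order all_algebra.
Set Implicit Arguments. Unset Strict Implicit. Unset Printing Implicit Defensive.
Import GRing.Theory.
Local Open Scope ring_scope.

(* q-ary words of length n: finite functions 'I_n -> 'Z_q (q >= 2 assumed
   wherever used, so that 'Z_q is Z/qZ with representatives 0..q-1). *)
Notation word q n := {ffun 'I_n -> 'Z_q}.

Definition constw (q n : nat) (i : 'Z_q) : word q n := [ffun => i].

Definition absdiff (a b : nat) : nat := (maxn a b - minn a b)%N.

Definition lee_dist (q n : nat) (v u : word q n) : nat :=
  (\sum_(k < n) minn (absdiff (v k) (u k)) (q - absdiff (v k) (u k)))%N.

(* Write n = k + 1 and e_i for the unit words. Every word off the line
   w + Z_q (1,...,1) is uniquely w + h + c (1,...,1) with c in Z_q and h a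
   nonzero word with h_k = 0.  So it suffices to find a Lee Gray path
   h_0, ..., h_(m-1) through these m = q^k - 1 words with
   h_0 + (1,...,1) = h_(m-1) + e_k: then G (c m + r) = w + h_r + c (1,...,1)
   visits the required words with unit steps, also from one value of c to
   the next, and G (j + m) = G j + (1,...,1).

   The path is grown one coordinate at a time.  After the nonzero words
   supported on coordinates < p, which are traversed from -e_0 to
   (p mod 2, 1, ..., 1, 0, ...), come those whose highest nonzero coordinate
   is p, in q - 1 layers, one for each value of that coordinate; each layer
   is a translate of a cyclic Gray code of Z_q^p, negated when p is odd.
   For k even the two ends satisfy the required relation. *)

From mathcomp Require Import all_boot all_order all_algebra.
From mathcomp Require Import zify ring.
Set Implicit Arguments. Unset Strict Implicit. Unset Printing Implicit Defensive.
Import GRing.Theory.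
Local Open Scope ring_scope.

Section AllpairsPath.

Variables (S U T : Type) (f : S -> U -> T).

Lemma last_allpairs x s0 s u0 u :
  last x [seq f y v | y <- s0 :: s, v <- u0 :: u] = f (last s0 s) (last u0 u).
Proof.
elim: s s0 x => [|s1 s IH] s0 x; first by rewrite allpairs1l /= last_map.
by rewrite allpairs_cons last_cat IH.
Qed.

Lemma sorted_allpairs (eS : rel S) (e : rel T) s0 s u0 u :
    (forall y, path e (f y u0) [seq f y v | v <- u]) ->
    (forall y y', eS y y' -> e (f y (last u0 u)) (f y' u0)) ->
  path eS s0 s -> sorted e [seq f y v | y <- s0 :: s, v <- u0 :: u].
Proof.
move=> layer join; elim: s s0 => [|s1 s IH] s0 /=; first by rewrite cats0 layer.
by case/andP=> e01 /IH; rewrite cat_path layer last_map /= join.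
Qed.

End AllpairsPath.

Lemma path_map_iota (T : Type) (e : rel T) (F : nat -> T) m N :
  (forall a, e (F a) (F a.+1)) -> path e (F m) [seq F a | a <- iota m.+1 N].
Proof. by move=> eF; elim: N m => //= N IH m; rewrite eF IH. Qed.

Lemma iota0_cons N : (0 < N)%N -> iota 0 N = 0%N :: iota 1 N.-1.
Proof. by case: N. Qed.

Lemma last_iota m N : last m (iota m.+1 N) = (m + N)%N.
Proof. by elim: N m => [|N IH] m /=; rewrite ?addn0 // IH addnS. Qed.

Lemma divn_modn_lt q m j : (j < q * m)%N ->
  [/\ j = (j %/ m * m + j %% m)%N, (j %/ m < q)%N & (j %% m < m)%N].
Proof.
move=> hj; have : (0 < q * m)%N := leq_ltn_trans (leq0n j) hj.
rewrite muln_gt0 => /andP[_ m_gt0].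
by split; [exact: divn_eq | rewrite ltn_divLR // mulnC | exact: ltn_pmod].
Qed.

Section LeeWeight.

Variable q : nat.
Hypothesis q_gt1 : (1 < q)%N.

Lemma val_Zq_lt (a : 'Z_q) : (a < q)%N.
Proof. by rewrite -{2}(Zp_cast q_gt1) ltn_ord. Qed.

Lemma natr_Zq_inj a b : (a < q)%N -> (b < q)%N -> (a%:R : 'Z_q) = b%:R -> a = b.
Proof. by move=> ha hb /(congr1 val); rewrite /= !val_Zp_nat // !modn_small. Qed.

Lemma val_Zq_sub (a b : 'Z_q) : val (a - b) = ((a + q - b) %% q)%N.
Proof.
have hb := val_Zq_lt b.
rewrite -val_Zp_nat // natrB; last lia.
by rewrite natrD pchar_Zp // addr0 !natr_Zp.
Qed.

Definition lee_weight (c : 'Z_q) : nat := minn c (- c).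

Lemma lee_weightN c : lee_weight (- c) = lee_weight c.
Proof. by rewrite /lee_weight opprK minnC. Qed.

Lemma lee_weight1 : lee_weight 1 = 1%N.
Proof.
have v1 : val (1 : 'Z_q) = 1%N by have := val_Zp_nat q_gt1 1; rewrite modn_small.
have := val_Zq_sub 0 1; rewrite sub0r v1 /lee_weight => ->.
rewrite v1 add0n modn_small; lia.
Qed.

Lemma lee_coordE (a b : 'Z_q) :
  minn (absdiff a b) (q - absdiff a b) = lee_weight (a - b).
Proof.
rewrite /lee_weight /absdiff opprB !val_Zq_sub.
have := val_Zq_lt a; have := val_Zq_lt b.
case: (ltngtP a b) => hab hb ha.
- rewrite (@modn_small (a + q - b)); last lia.
  rewrite (_ : b + q - a = b - a + q)%N ?modnDr ?modn_small; lia.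
- rewrite (@modn_small (b + q - a)); last lia.
  rewrite (_ : a + q - b = a - b + q)%N ?modnDr ?modn_small; lia.
- rewrite hab subnn addnC addnK modnn; lia.
Qed.

Lemma natr_predq N : N.+1 = q -> (N%:R : 'Z_q) = -1.
Proof. by move=> eN; apply: (addIr 1); rewrite natr1 eN pchar_Zp // addNr. Qed.

End LeeWeight.

Section LeeGrayPath.

Variables (q n : nat).
Hypothesis q_gt1 : (1 < q)%N.
Local Notation W := (word q n).

Definition single (i : nat) (c : 'Z_q) : W :=
  [ffun j : 'I_n => if j == i :> nat then c else 0].

Lemma lee_distE (x y : W) : lee_dist x y = (\sum_(k < n) lee_weight (x k - y k)%R)%N.
Proof. by apply: eq_bigr => k _; rewrite lee_coordE. Qed.

Lemma lee_distDr (c x y : W) : lee_dist (x + c) (y + c) = lee_dist x y.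
Proof.
by rewrite !lee_distE; apply: eq_bigr => k _; rewrite !ffunE opprD addrACA subrr addr0.
Qed.

Lemma lee_distNN (x y : W) : lee_dist (- x) (- y) = lee_dist x y.
Proof.
by rewrite !lee_distE; apply: eq_bigr => k _; rewrite !ffunE -opprD lee_weightN.
Qed.

Lemma single0 i : single i 0 = 0.
Proof. by apply/ffunP => j; rewrite !ffunE; case: ifP. Qed.

Lemma singleD i c d : single i (c + d) = single i c + single i d.
Proof. by apply/ffunP => j; rewrite !ffunE; case: ifP; rewrite ?addr0. Qed.

Definition lee_adj : rel W := fun x y => lee_dist x y == 1%N.

Lemma lee_adj_single (x : W) i c :
  (i < n)%N -> lee_adj x (x + single i c) = (lee_weight c == 1%N).
Proof.
move=> hi; rewrite /lee_adj lee_distE (bigD1 (Ordinal hi)) //= big1 ?addn0.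
  by rewrite !ffunE eqxx opprD addNKr lee_weightN.
move=> k /eqP hk; rewrite !ffunE ifN; first by rewrite addr0 subrr /lee_weight oppr0 minnn.
apply/eqP => ki; apply: hk; exact: val_inj.
Qed.

Lemma lee_adj_step (x : W) i : (i < n)%N ->
  lee_adj x (x + single i 1) /\ lee_adj x (x + single i (-1)).
Proof. by move=> hi; rewrite !lee_adj_single // lee_weightN lee_weight1. Qed.

Definition signw (b : bool) (x : W) : W := if b then - x else x.

Lemma signwK b : involutive (signw b).
Proof. by case: b => x //=; rewrite opprK. Qed.

Lemma signw0 b : signw b 0 = 0.
Proof. by case: b; rewrite /= ?oppr0. Qed.

Lemma signwE b (x : W) j : signw b x j = if b then - x j else x j.
Proof. by case: b; rewrite //= ffunE. Qed.

Lemma lee_dist_signw b (x y : W) : lee_dist (signw b x) (signw b y) = lee_dist x y.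
Proof. by case: b => //=; rewrite lee_distNN. Qed.

Definition zero_from (p : nat) (x : W) : bool :=
  [forall j : 'I_n, (p <= j)%N ==> (x j == 0)].

Lemma zero_fromP p (x : W) :
  reflect (forall j : 'I_n, (p <= j)%N -> x j = 0) (zero_from p x).
Proof.
apply: (iffP forallP) => h j; last by apply/implyP => /h ->.
by move=> hj; apply/eqP; exact: (implyP (h j)).
Qed.

Lemma zero_from0 (x : W) : zero_from 0 x = (x == 0).
Proof.
apply/zero_fromP/eqP => [h|-> j _]; last by rewrite ffunE.
by apply/ffunP => j; rewrite h // ffunE.
Qed.

Lemma zero_fromS p (x : W) : zero_from p x -> zero_from p.+1 x.
Proof. by move=> /zero_fromP h; apply/zero_fromP => j hj; apply: h; lia. Qed.

Lemma zero_from_drop p (x : W) (hp : (p < n)%N) :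
  zero_from p.+1 x -> zero_from p (x - single p (x (Ordinal hp))).
Proof.
move=> /zero_fromP h; apply/zero_fromP => j hj; rewrite !ffunE.
case: eqP => [jp|jp]; last by rewrite h ?subr0 //; lia.
by rewrite (_ : j = Ordinal hp) ?subrr //; exact: val_inj.
Qed.

Definition word_sum (x : W) : 'Z_q := \sum_(j < n) x j.

Lemma word_sumD (x y : W) : word_sum (x + y) = word_sum x + word_sum y.
Proof. by rewrite /word_sum -big_split; apply: eq_bigr => j _; rewrite ffunE. Qed.

Lemma word_sum0 : word_sum 0 = 0.
Proof. by rewrite /word_sum big1 // => j _; rewrite ffunE. Qed.

Lemma word_sum_single i c : (i < n)%N -> word_sum (single i c) = c.
Proof.
move=> hi; rewrite /word_sum (bigD1 (Ordinal hi)) //= big1 ?addr0; first by rewrite ffunE eqxx.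
move=> j /eqP hj; rewrite ffunE ifN //; apply/eqP => ji; apply: hj; exact: val_inj.
Qed.

(** * Cyclic Gray codes *)

(* The offset [- word_sum g] makes consecutive layers meet, because every
   step of [gray p] raises [word_sum] by one. *)
Fixpoint gray (p : nat) : seq W :=
  if p is p'.+1 then
    [seq g + single p' (a%:R - word_sum g) | g <- gray p', a <- iota 0 q]
  else [:: 0].

Definition up_step : rel W := fun x y => [exists i : 'I_n, y == x + single i 1].

Lemma up_step_lee_adj (x y : W) : up_step x y -> lee_adj x y.
Proof. by case/existsP => i /eqP ->; case: (lee_adj_step x (ltn_ord i)). Qed.

Lemma size_gray p : size (gray p) = (q ^ p)%N.
Proof. by elim: p => //= p IH; rewrite size_allpairs IH size_iota expnSr. Qed.

Lemma gray_cons p : gray p = 0 :: behead (gray p).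
Proof.
elim: p => //= p IH; rewrite IH (iota0_cons (ltnW q_gt1)) allpairs_cons /= word_sum0 subrr.
by rewrite single0 addr0.
Qed.

Lemma last_behead_gray p : last 0 (behead (gray p)) = last 0 (gray p).
Proof. by rewrite {2}gray_cons. Qed.

Lemma mem_gray p (x : W) : (p <= n)%N -> (x \in gray p) = zero_from p x.
Proof.
elim: p x => [|p IH] x hp; first by rewrite inE zero_from0.
apply/allpairsP/idP => [[[g a] /= [gg _ ->]]|x0].
  move: gg; rewrite IH; last lia.
  move=> /zero_fromP g0; apply/zero_fromP => j hj; rewrite !ffunE g0; last lia.
  by rewrite ifN ?addr0 //; lia.
set g := x - single p (x (Ordinal hp)).
exists (g, nat_of_ord (x (Ordinal hp) + word_sum g)); split.
- by rewrite IH ?zero_from_drop //; lia.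
- by rewrite mem_iota add0n val_Zq_lt.
- by rewrite natr_Zp addrK subrK.
Qed.

Lemma uniq_gray p : (p <= n)%N -> uniq (gray p).
Proof.
elim: p => // p IH hp /=; have hp' : (p <= n)%N by lia.
rewrite allpairs_uniq ?IH ?iota_uniq //.
move=> [g a] [g' a'] /allpairsP[[g1 a1] /= [g1g a1q [-> ->]]].
move=> /allpairsP[[g2 a2] /= [g2g a2q [-> ->]]] /= E.
move: g1g g2g a1q a2q; rewrite !mem_gray ?mem_iota //.
move=> /zero_fromP g10 /zero_fromP g20 /andP[_ a1q] /andP[_ a2q].
have eg : g1 = g2.
  apply/ffunP => j; case: (ltnP j p) => hj; last by rewrite g10 ?g20.
  have := congr1 (fun v : W => v j) E; rewrite !ffunE !ifN ?addr0 //; lia.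
move: E; rewrite -eg => /addrI/(congr1 (fun v : W => v (Ordinal hp))).
rewrite !ffunE eqxx => /addIr /natr_Zq_inj ea.
by rewrite ea.
Qed.

Lemma sorted_gray p : (p <= n)%N -> sorted up_step (gray p).
Proof.
elim: p => // p IH hp; rewrite /= [gray p]gray_cons (iota0_cons (ltnW q_gt1)).
apply: (sorted_allpairs (eS := up_step)).
- move=> g; apply: (path_map_iota (F := fun a => g + single p (a%:R - word_sum g))).
  move=> a; apply/existsP; exists (Ordinal hp); apply/eqP/ffunP => j.
  by rewrite !ffunE -natr1; case: ifP => _; ring.
- move=> g g' /existsP[i /eqP ->]; rewrite last_iota (natr_predq q_gt1 (ltn_predK q_gt1)).
  apply/existsP; exists i; apply/eqP/ffunP => j.
  rewrite !ffunE word_sumD word_sum_single //.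
  by case: ifP => _; case: ifP => _; ring.
- by have := IH (ltnW hp); rewrite gray_cons.
Qed.

Lemma last_gray p : (0 < p <= n)%N -> last 0 (gray p) = single 0 (-1).
Proof.
elim: p => // p IH /andP[_ hp].
rewrite /= [gray p]gray_cons (iota0_cons (ltnW q_gt1)) last_allpairs last_iota (natr_predq q_gt1 (ltn_predK q_gt1)).
rewrite last_behead_gray; case: (posnP p) => [->|p_gt0]; first by rewrite /= word_sum0 subr0 add0r.
rewrite IH ?p_gt0 ?word_sum_single ?subrr ?single0 ?addr0 //; lia.
Qed.

Lemma mulrn_predq N (x : W) : N.+1 = q -> x *+ N = - x.
Proof.
by move=> eN; apply/ffunP => j; rewrite ffunMnE ffunE -mulr_natr natr_predq // mulrN1.
Qed.

Lemma zero_from_last_gray p : (p <= n)%N -> zero_from p (last 0 (gray p)).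
Proof. by move=> hp; rewrite -mem_gray // gray_cons /= mem_last. Qed.

(** * A Lee Gray path through the nonzero words *)

Definition ham_end (p : nat) : W := [ffun j : 'I_n =>
  if j == 0%N :> nat then (odd p)%:R else if (j < p)%N then 1 else 0].

Lemma ham_end0 : ham_end 0 = 0.
Proof. by apply/ffunP => j; rewrite !ffunE; case: ifP. Qed.

(* Translating by [a] times the last word of [gray p] makes layer [a] start
   where layer [a-1] ends, up to coordinate [p]; the sign makes the block
   end at [ham_end p.+1]. *)
Definition block_word p a g : W :=
  ham_end p + signw (odd p) (g + last 0 (gray p) *+ a) + single p (- a.+1%:R).

Definition block p : seq W :=
  [seq block_word p a g | a <- iota 0 q.-1, g <- gray p].

Lemma size_block p : size (block p) = (q.-1 * q ^ p)%N.
Proof. by rewrite size_allpairs size_iota size_gray. Qed.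

Lemma lee_dist_block_word p a (x y : W) :
  lee_dist (block_word p a x) (block_word p a y) = lee_dist x y.
Proof.
by rewrite lee_distDr ![ham_end p + _]addrC lee_distDr lee_dist_signw lee_distDr.
Qed.

Lemma block_word_top p a g (hp : (p < n)%N) :
  g \in gray p -> block_word p a g (Ordinal hp) = - a.+1%:R.
Proof.
rewrite mem_gray ?(ltnW hp) // => /zero_fromP g0.
have /zero_fromP l0 := zero_from_last_gray (ltnW hp).
rewrite !ffunE signwE !ffunE ffunMnE g0 // l0 // mul0rn addr0 oppr0 if_same eqxx ltnn.
by rewrite /= addr0; case: eqP => [p0|_]; rewrite ?p0 ?add0r.
Qed.

Lemma zero_from_block_word p a g :
  (p < n)%N -> g \in gray p -> zero_from p.+1 (block_word p a g).
Proof.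
move=> hp; rewrite mem_gray ?(ltnW hp) // => /zero_fromP g0.
have /zero_fromP l0 := zero_from_last_gray (ltnW hp).
apply/zero_fromP => j hj; rewrite !ffunE signwE !ffunE ffunMnE g0 ?l0; try lia.
by rewrite mul0rn addr0 oppr0 if_same !ifN ?addr0 //; lia.
Qed.

Lemma mem_block p (x : W) (hp : (p < n)%N) :
  (x \in block p) = zero_from p.+1 x && ~~ zero_from p x.
Proof.
apply/allpairsP/andP => [[[a g] /= [+ gg ->]]|[x1 x0]].
  rewrite mem_iota => /andP[_ aq]; split; first exact: zero_from_block_word.
  apply/zero_fromP => /(_ (Ordinal hp) (leqnn p)); rewrite block_word_top //.
  by move/eqP; rewrite oppr_eq0 => /eqP /(@natr_Zq_inj _ q_gt1 _ 0); lia.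
set c := x (Ordinal hp).
have c0 : - c != 0.
  apply: contra x0; rewrite oppr_eq0 => /eqP c0.
  by have := zero_from_drop hp x1; rewrite -/c c0 single0 subr0.
have vc : (0 < nat_of_ord (- c))%N by rewrite lt0n; apply: contra c0 => /eqP v0; apply/eqP/val_inj.
set a := (nat_of_ord (- c)).-1; have ea : a.+1%:R = - c by rewrite prednK // natr_Zp.
set g := signw (odd p) (x - ham_end p - single p (- a.+1%:R)) - last 0 (gray p) *+ a.
have aq : (a < q.-1)%N by have := val_Zq_lt q_gt1 (- c); lia.
exists (a, g); split.
- by rewrite mem_iota add0n.
- rewrite mem_gray ?(ltnW hp) //; apply/zero_fromP => j hj.
  have /zero_fromP l0 := zero_from_last_gray (ltnW hp).
  rewrite !ffunE signwE !ffunE ffunMnE l0 // mul0rn subr0 ea opprK.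
  case: (ltngtP j p) => jp; first lia.
    have j0 : (j == 0 :> nat) = false by lia.
    by rewrite (zero_fromP _ _ x1) // j0 !subr0 oppr0 if_same.
  rewrite (_ : j = Ordinal hp) ?eqxx; last exact: val_inj.
  by rewrite -/c /=; case: eqP => [p0|_]; rewrite ?p0 ?mulr0n subr0 subrr oppr0 ?if_same.
- by rewrite /block_word /g subrK signwK -addrA subrK addrC subrK.
Qed.

Lemma uniq_block p : (p < n)%N -> uniq (block p).
Proof.
move=> hp; rewrite allpairs_uniq ?iota_uniq ?uniq_gray ?(ltnW hp) //.
move=> [a g] [a' g'] /allpairsP[[a1 g1] /= [a1q g1g [-> ->]]].
move=> /allpairsP[[a2 g2] /= [a2q g2g [-> ->]]] /= E.
have ea : a1 = a2.
  move: a1q a2q (congr1 (fun v : W => v (Ordinal hp)) E).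
  rewrite !mem_iota !block_word_top // => /andP[_ a1q] /andP[_ a2q].
  by move/oppr_inj/natr_Zq_inj; lia.
by move: E; rewrite ea => /addIr/addrI/(can_inj (signwK _))/addIr ->.
Qed.

Lemma path_block p : (p < n)%N -> path lee_adj (ham_end p) (block p).
Proof.
move=> hp; have q1_gt0 : (0 < q.-1)%N by lia.
rewrite /block (iota0_cons q1_gt0) [gray p]gray_cons.
set s := flatten _; have -> : s = block_word p 0 0 :: behead s by [].
rewrite /= {1}/block_word add0r mulr0n signw0 addr0.
have [_ ->] := lee_adj_step (ham_end p) hp.
apply: (sorted_allpairs (eS := fun a b => b == a.+1)).
- move=> a; rewrite path_map; have := sorted_gray (ltnW hp); rewrite gray_cons /=.
  apply: sub_path => x y /up_step_lee_adj.
  by rewrite /relpre /lee_adj /= lee_dist_block_word.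
- move=> a _ /eqP ->; rewrite last_behead_gray.
  have -> : block_word p a.+1 0 = block_word p a (last 0 (gray p)) + single p (-1).
    by rewrite /block_word add0r mulrS -[RHS]addrA -singleD -opprD natr1.
  by have [_ ->] := lee_adj_step (block_word p a (last 0 (gray p))) hp.
- by rewrite -(map_id (iota 1 q.-2)); apply: (@path_map_iota _ _ id).
Qed.

Lemma last_block p x : (p < n)%N -> last x (block p) = ham_end p.+1.
Proof.
move=> hp; have q1_gt0 : (0 < q.-1)%N by lia.
rewrite /block (iota0_cons q1_gt0) [gray p]gray_cons last_allpairs last_iota add0n.
have q2 : q.-2.+2 = q by lia.
rewrite last_behead_gray /block_word -mulrS mulrn_predq // natr_predq // opprK.
case: (posnP p) => [p0|p_gt0].
  apply/ffunP => j; rewrite p0 /= !ffunE.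
  case: eqP => [_|j0] /=; first by rewrite mulr0n subr0 add0r.
  by rewrite ltnS leqn0 (introF eqP j0) subr0 addr0.
rewrite last_gray ?p_gt0 ?(ltnW hp) //; apply/ffunP => j.
rewrite !ffunE signwE !ffunE oddS.
case: eqP => [j0|j0] /=.
  rewrite j0 eq_sym (gtn_eqF p_gt0) addr0.
  by case: odd; rewrite /= ?opprK ?addrN ?mulr0n ?add0r.
rewrite !oppr0 if_same addr0 ltnS [(j <= p)%N]leq_eqVlt.
by case: eqP => [->|_]; rewrite ?ltnn ?add0r ?addr0.
Qed.

Fixpoint ham_path (p : nat) : seq W :=
  if p is p'.+1 then ham_path p' ++ block p' else [::].

Lemma size_ham_path p : size (ham_path p) = (q ^ p - 1)%N.
Proof.
elim: p => //= p IH; rewrite size_cat IH size_block expnS.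
have : (0 < q ^ p)%N by rewrite expn_gt0; lia.
set Q := (q ^ p)%N; nia.
Qed.

Lemma mem_ham_path p (x : W) :
  (p <= n)%N -> (x \in ham_path p) = (x != 0) && zero_from p x.
Proof.
elim: p => [|p IH] hp; first by rewrite in_nil zero_from0 andNb.
rewrite /= mem_cat IH ?mem_block; try lia.
case x0 : (zero_from p x); first by rewrite (zero_fromS x0) /= orbF.
rewrite andbF /= andbT; case: eqP x0 => // -> /negbT/zero_fromP[] j _.
by rewrite ffunE.
Qed.

Lemma uniq_ham_path p : (p <= n)%N -> uniq (ham_path p).
Proof.
elim: p => //= p IH hp; rewrite cat_uniq IH ?uniq_block //; try lia.
rewrite andbT; apply/hasPn => x; rewrite mem_block //.
by case/andP=> _; apply: contra; rewrite mem_ham_path; [case/andP|lia].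
Qed.

Lemma last_ham_path p : (p <= n)%N -> last 0 (ham_path p) = ham_end p.
Proof.
by case: p => [|p] hp /=; rewrite ?ham_end0 // last_cat last_block.
Qed.

Lemma path_ham_path p : (p <= n)%N -> path lee_adj 0 (ham_path p).
Proof.
elim: p => //= p IH hp.
by rewrite cat_path IH ?last_ham_path ?path_block //; lia.
Qed.

Lemma head_ham_path p :
  (0 < p <= n)%N -> head 0 (ham_path p) = single 0 (-1).
Proof.
elim: p => // p IH /andP[_ hp] /=; case: (posnP p) => [->|p_gt0].
  have q1_gt0 : (0 < q.-1)%N by lia.
  rewrite /= /block (iota0_cons q1_gt0) /= /block_word mulr0n addr0 /=.
  by rewrite ham_end0 !add0r.
rewrite -!nth0 nth_cat size_ham_path.
have -> : (0 < q ^ p - 1)%N by have := leq_pexp2l (ltnW q_gt1) p_gt0; rewrite expn1; lia.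
by rewrite nth0 IH // p_gt0; lia.
Qed.

Lemma ham_path_ends p : n = p.+1 -> ~~ odd p ->
  head 0 (ham_path p) + constw n 1 = last 0 (ham_path p) + single p 1.
Proof.
move=> hn p_even; rewrite last_ham_path; last lia.
apply/ffunP => j; have jp : (j <= p)%N by rewrite -ltnS -hn.
case: (posnP p) => [p0|p_gt0].
  rewrite p0 /= !ffunE; have /eqP -> : (j == 0 :> nat) by rewrite -leqn0 -p0.
  by rewrite /= ?mulr0n !add0r.
rewrite head_ham_path; last lia.
rewrite !ffunE (negbTE p_even); case: eqP => [j0|j0].
  by rewrite j0 eq_sym (gtn_eqF p_gt0) addr0 addNr.
by rewrite add0r; case: (ltngtP j p) jp; rewrite ?addr0 ?add0r.
Qed.

End LeeGrayPath.

(** * Lifting along the diagonal *)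

Section LiftToCycle.

Variables (q k : nat) (w : word q k.+1) (H : seq (word q k.+1)).
Hypothesis q_gt1 : (1 < q)%N.
Hypothesis uniq_H : uniq H.
Hypothesis mem_H : forall x, (x \in H) = (x != 0) && zero_from k x.
Hypothesis sorted_H : sorted (@lee_adj q k.+1) H.
Hypothesis H_ends : head 0 H + constw k.+1 1 = last 0 H + single k.+1 k 1.

Local Notation m := (size H).

Definition lift_walk (j : nat) : word q k.+1 :=
  w + nth 0 H (j %% m) + constw k.+1 (j %/ m)%:R.

Lemma lift_walkE c r : (r < m)%N ->
  lift_walk (c * m + r) = w + nth 0 H r + constw k.+1 c%:R.
Proof.
move=> hr; rewrite /lift_walk divnMDl ?(leq_ltn_trans _ hr) //.
by rewrite divn_small // addn0 modnMDl modn_small.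
Qed.

Lemma nth_H_max r : (r < m)%N -> nth 0 H r ord_max = 0.
Proof.
by move=> hr; have := mem_nth 0 hr; rewrite mem_H => /andP[_ /zero_fromP->].
Qed.

Lemma lift_walk_inj i j : (i < q * m)%N -> (j < q * m)%N ->
  lift_walk i = lift_walk j -> i = j.
Proof.
move=> /divn_modn_lt[ei ci ri] /divn_modn_lt[ej cj rj].
rewrite ei ej !lift_walkE // => E.
have ec : (i %/ m = j %/ m)%N.
  move/(congr1 (fun v : word q k.+1 => v ord_max)): E; rewrite !ffunE !nth_H_max // !addr0.
  by move/addrI/natr_Zq_inj; apply.
move: E; rewrite ec => /addIr/addrI/eqP; rewrite nth_uniq // => /eqP -> //.
Qed.

Lemma lift_walk_image x :
  (forall i : 'Z_q, x <> w + constw k.+1 i) <->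
  exists2 j, (j < q * m)%N & lift_walk j = x.
Proof.
split=> [x_off|[j /divn_modn_lt[ej cj rj] <-] i].
  set c := x ord_max - w ord_max; set v := x - w - constw k.+1 c.
  have v_in : v \in H.
    rewrite mem_H; apply/andP; split.
      apply/eqP => v0; apply: (x_off c); apply/ffunP => t.
      move/(congr1 (fun u : word q k.+1 => u t)): v0; rewrite !ffunE => e.
      by apply/eqP; rewrite -subr_eq0 opprD addrA e.
    apply/zero_fromP => t; rewrite leq_eqVlt ltnNge -ltnS ltn_ord orbF => /eqP tk.
    by rewrite (_ : t = ord_max) ?ffunE /c ?subrr //; exact: val_inj.
  exists (c * m + index v H)%N.
    apply: (leq_trans _ (leq_mul (val_Zq_lt q_gt1 c) (leqnn m))).
    by rewrite mulSn addnC ltn_add2r index_mem.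
  rewrite lift_walkE ?index_mem // nth_index // natr_Zp.
  by apply/ffunP => t; rewrite !ffunE; ring.
rewrite ej lift_walkE // => E.
have := mem_nth 0 rj; rewrite mem_H => /andP[/eqP nz /zero_fromP h0].
set h := nth 0 H _ in E nz h0; set c : 'Z_q := (j %/ m)%:R in E.
have hE : h = constw k.+1 (i - c).
  apply/ffunP => t; move/(congr1 (fun v : word q k.+1 => v t)): E.
  rewrite !ffunE => e.
  have -> : i = w t + h t + c - w t by rewrite e addrC addKr.
  ring.
have ic : i - c = 0 by have := h0 ord_max (leqnn k); rewrite hE ffunE.
by apply: nz; rewrite hE ic; apply/ffunP => t; rewrite !ffunE.
Qed.

Lemma lift_walk_adj j :
  (j.+1 < q * m)%N -> lee_dist (lift_walk j) (lift_walk j.+1) = 1%N.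
Proof.
move=> hj1; have [ej cj rj] := divn_modn_lt (ltnW hj1).
set c := (j %/ m)%N in ej cj *; set r := (j %% m)%N in ej rj *.
rewrite ej; case: (ltnP r.+1 m) => hr.
  rewrite -addnS !lift_walkE // lee_distDr // (addrC w) (addrC w) lee_distDr //.
  by apply/eqP; move/(sortedP 0): sorted_H; apply.
have er : r = m.-1 by lia.
have m_gt0 : (0 < m)%N by lia.
rewrite (_ : (c * m + r).+1 = c.+1 * m + 0)%N; last by rewrite er addn0 mulSnr -addnS prednK.
rewrite !lift_walkE // nth0 er nth_last.
have -> : w + head 0 H + constw k.+1 c.+1%:R =
          w + last 0 H + constw k.+1 c%:R + single k.+1 k 1.
  apply/ffunP => t; move/(congr1 (fun v : word q k.+1 => v t)): H_ends.
  rewrite !ffunE -natr1 => e.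
  rewrite (_ : _ + _ + _ + _ = w t + (last 0 H t + single k.+1 k 1 t) + c%:R).
    by rewrite ffunE -e; ring.
  by rewrite ffunE; ring.
by apply/eqP; have [] := lee_adj_step q_gt1 (w + last 0 H + constw k.+1 c%:R) (ltnSn k).
Qed.

Lemma lift_walk_shift j : (j < q * m)%N ->
  lift_walk ((j + m) %% (q * m)) = lift_walk j + constw k.+1 1.
Proof.
move=> hj; have [ej cj rj] := divn_modn_lt hj.
set c := (j %/ m)%N in ej cj *; set r := (j %% m)%N in ej rj *.
rewrite ej addnAC -mulSnr lift_walkE //; case: (ltnP c.+1 q) => hc.
  rewrite modn_small; last first.
    apply: leq_trans (leq_mul hc (leqnn m)).
    by rewrite [X in (_ < X)%N]mulSnr ltn_add2l.
  by rewrite lift_walkE //; apply/ffunP => t; rewrite !ffunE -natr1 addrA.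
have ec : c.+1 = q by lia.
rewrite ec modnDl modn_small; last by apply: leq_trans rj _; rewrite leq_pmull; lia.
have := lift_walkE 0 rj; rewrite mul0n add0n => ->.
by apply/ffunP => t; rewrite !ffunE -[RHS]addrA natr1 ec pchar_Zp.
Qed.

End LiftToCycle.

Theorem theorem3 (n q : nat) (w : word q n) :
  odd n -> (4 <= q)%N -> ~~ odd q ->
  exists G : nat -> word q n,
    [/\ (* G is injective on 0 .. q^n-q-1 *)
        (forall i j, (i < q ^ n - q)%N -> (j < q ^ n - q)%N -> G i = G j -> i = j),
        (* its image is exactly Z_q^n minus {w + (i,...,i)} *)
        (forall x : word q n,
            (forall i : 'Z_q, x <> w + constw n i) <->
            exists2 j, (j < q ^ n - q)%N & G j = x),
        (* consecutive words at Lee distance 1 *)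
        (forall j, (j.+1 < q ^ n - q)%N -> lee_dist (G j) (G j.+1) = 1%N) &
        (* shift property *)
        (forall j, (j < q ^ n - q)%N ->
            G ((j + q ^ n.-1 - 1) %% (q ^ n - q))%N = G j + constw n 1)].
Proof.
move=> n_odd q_ge4 _; have q_gt1 : (1 < q)%N by lia.
case: n w n_odd => [//|k] w /= k_even.
have hk := leqnSn k.
set H := ham_path q k.+1 k.
have uniq_H : uniq H := uniq_ham_path q_gt1 hk.
have mem_H x : (x \in H) = (x != 0) && zero_from k x := mem_ham_path q_gt1 x hk.
have sorted_H : sorted (@lee_adj q k.+1) H := path_sorted (path_ham_path q_gt1 hk).
have H_ends := ham_path_ends q_gt1 (erefl k.+1) k_even.
have q_pow : (0 < q ^ k)%N by rewrite expn_gt0; lia.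
have -> : (q ^ k.+1 - q = q * size H)%N.
  by rewrite size_ham_path // mulnBr muln1 expnS.
exists (lift_walk w H); split.
- exact: lift_walk_inj.
- exact: lift_walk_image.
- exact: lift_walk_adj.
- move=> j hj; have -> : (j + q ^ k - 1 = j + size H)%N.
    by rewrite size_ham_path //; lia.
  exact: lift_walk_shift.
Qed.
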